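(* Assume that linear maps $A,B:\mathcal K\to\mathcal K$ are such that $(A,B):\mathcal K\oplus\mathcal K\to\mathcal K$ has maximal rank $\dim\mathcal K$ and $AB^\dagger$ is self-adjoint. Then the function $f(\varkappa)=\det(A-\varkappa B)$ has precisely $n_+(\mathcal M(A,B))$ positive zeroes and $n_-(\mathcal M(A,B))$ negative zeroes (counting multiplicity). If $\varkappa=0$ is a zero of $f$, then its multiplicity equals $\operatorname{Rank}B-n_+(\mathcal M(A,B))-n_-(\mathcal M(A,B))$, which is $\leq n_0(\mathcal M(A,B))$.
   Context: $\mathcal K$ is a finite-dimensional complex Hilbert space (in the paper $\mathcal K\cong\mathbb C^{|\mathcal E|+2|\mathcal I|}$). $\mathcal M(A,B)=\{\chi_1\oplus\chi_2\in\mathcal K\oplus\mathcal K: A\chi_1+B\chi_2=0\}$. $n_+(\mathcal M(A,B))$, $n_-(\mathcal M(A,B))$, $n_0(\mathcal M(A,B))$ denote the numbers (with multiplicity) of positive, negative and zero eigenvalues of the self-adjoint matrix $AB^\dagger$. *)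

From HB Require Import structures.
From mathcomp Require Import all_boot all_order all_algebra.
From mathcomp Require Import complex.
Set Implicit Arguments. Unset Strict Implicit. Unset Printing Implicit Defensive.
Import Order.TTheory GRing.Theory Num.Theory.
Local Open Scope ring_scope.

Definition adjmx (C : numClosedFieldType) m n (M : 'M[C]_(m, n)) : 'M[C]_(n, m) :=
  map_mx Num.conj M^T.

(* The zeros of a polynomial over an algebraically closed field, listed with
   multiplicity: a sequence r with p = lead_coef p *: \prod_(z <- r) ('X - z). *)
Definition roots_mult (F : closedFieldType) (p : {poly F}) : seq F :=
  sval (closed_field_poly_normal p).

Definition npos_zeros (C : numClosedFieldType) (p : {poly C}) : nat :=
  count (fun z => 0 < z) (roots_mult p).
Definition nneg_zeros (C : numClosedFieldType) (p : {poly C}) : nat :=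
  count (fun z => z < 0) (roots_mult p).

Definition eigenvalues (C : numClosedFieldType) n (M : 'M[C]_n) : seq C :=
  roots_mult (char_poly M).

(* n_+, n_-, n_0 of M(A,B): numbers of positive, negative, zero eigenvalues
   (with multiplicity) of A B^dagger. *)
Definition n_plus (C : numClosedFieldType) n (A B : 'M[C]_n) : nat :=
  count (fun z => 0 < z) (eigenvalues (A *m adjmx B)).
Definition n_minus (C : numClosedFieldType) n (A B : 'M[C]_n) : nat :=
  count (fun z => z < 0) (eigenvalues (A *m adjmx B)).
Definition n_zero (C : numClosedFieldType) n (A B : 'M[C]_n) : nat :=
  count (fun z => z == 0) (eigenvalues (A *m adjmx B)).

Definition detpencil (C : numClosedFieldType) n (A B : 'M[C]_n) : {poly C} :=
  \det (map_mx polyC A - 'X *: map_mx polyC B).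

From HB Require Import structures.
From mathcomp Require Import all_boot all_order all_algebra.
From mathcomp Require Import complex zify.
Import Order.TTheory GRing.Theory Num.Theory.
Local Open Scope ring_scope.
Set Implicit Arguments. Unset Strict Implicit. Unset Printing Implicit Defensive.

(* Pick a unitary Q such that B Q^† has its last s = n - rank B columns zero
   and an invertible X with X B Q^† = diag(1_r, 0_s).  Writing
   X A Q^† = [a b; c d], the self-adjoint matrix X (A B^†) X^† equals
   [a 0; c 0], so c = 0 and a is Hermitian, and maximality of the rank of
   (A, B) forces d to be invertible.  Then det(A - κB) is a nonzero multiple
   of det(κ - a), whose zeros are the eigenvalues of a, while by Sylvester's
   law of inertia A B^† has the positive and negative eigenvalues of a and,
   besides the zero eigenvalues of a, s further zero eigenvalues. *)

Lemma count_enum_card (T : finType) (a : pred T) : count a (enum T) = #|a|.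
Proof.
by rewrite cardE /enum_mem size_filter count_filter; apply: eq_count => x; rewrite !inE andbT.
Qed.

Lemma common_nonzero_row (F : fieldType) m p q (U : 'M[F]_(p, m)) (V : 'M[F]_(q, m)) :
  (m < \rank U + \rank V)%N ->
  exists (y : 'rV_p) (z : 'rV_q), y *m U != 0 /\ y *m U = z *m V.
Proof.
move=> ltm; have : \rank (U :&: V)%MS != 0%N.
  have := mxrank_sum_cap U V; have := rank_leq_col (U + V)%MS; lia.
rewrite mxrank_eq0 => /rowV0Pn[u]; rewrite sub_capmx => /andP[/submxP[y ->]].
by move=> /submxP[z yz] u0; exists y, z.
Qed.

Lemma mxrank_row_mx_mul (F : fieldType) n (X Y A B : 'M[F]_n) :
  X \in unitmx -> Y \in unitmx ->
  \rank (row_mx (X *m A *m Y) (X *m B *m Y)) = \rank (row_mx A B).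
Proof.
move=> Xu Yu; have -> : row_mx (X *m A *m Y) (X *m B *m Y)
    = X *m row_mx A B *m block_mx Y 0 0 Y.
  by rewrite mul_mx_row mul_row_block !mulmx0 addr0 add0r.
have YYu : block_mx Y 0 0 Y \in unitmx by rewrite unitmxE det_ublock unitrM -!unitmxE Yu.
by rewrite mxrankMfree ?row_free_unit // (eqmxMfull _ _) ?row_full_unit.
Qed.

Lemma pid_mx_unit_mul (F : fieldType) r s (B : 'M[F]_(r + s, r)) :
  \rank B = r -> exists2 X, X \in unitmx & X *m B = pid_mx r.
Proof.
move=> rB; have := mulmx_ebase B; rewrite rB.
set U := row_ebase B; set L := col_ebase B => defB.
pose U' := block_mx U 0 0 (1%:M : 'M[F]_s).
have U'u : U' \in unitmx by rewrite unitmxE det_ublock det1 mulr1 -unitmxE row_ebase_unit.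
have pidU : pid_mx r *m U = U' *m pid_mx r.
  rewrite pid_mx_col mul_col_mx mul_block_col mul1mx mul0mx.
  by rewrite mulmx1 !mulmx0 mul0mx addr0 add0r.
exists (invmx (L *m U')); first by rewrite unitmx_inv unitmx_mul col_ebase_unit.
by rewrite -defB -mulmxA pidU (mulmxA L) mulKmx // unitmx_mul col_ebase_unit.
Qed.

Lemma unitmx_pencil_block (F : fieldType) r s (a : 'M[F]_r) b (d : 'M[F]_s) :
  \rank (row_mx (block_mx a b 0 d) (pid_mx r : 'M_(r + s))) = (r + s)%N ->
  d \in unitmx.
Proof.
move=> rk; apply/negPn/negP => dNu.
have : kermx d != 0.
  rewrite -mxrank_eq0 mxrank_ker subn_eq0 -ltnNge ltn_neqAle rank_leq_row andbT.
  by rewrite -row_free_unit in dNu.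
case/rowV0Pn => v /sub_kermxP vd /negP; apply.
have /eqP : row_mx 0 v *m row_mx (block_mx a b 0 d) (pid_mx r : 'M_(r + s)) = 0.
  rewrite mul_mx_row pid_mx_block !mul_row_block vd !mul0mx !mulmx0 !addr0.
  by rewrite !row_mx0.
by rewrite mulmx_free_eq0 ?row_mx_eq0 ?eqxx // /row_free rk.
Qed.

Lemma char_poly_similar (R : comUnitRingType) n (P M : 'M[R]_n) : P \in unitmx ->
  char_poly (invmx P *m M *m P) = char_poly M.
Proof.
move=> Pu; rewrite /char_poly /char_poly_mx.
have XE : ('X%:M : 'M[{poly R}]_n) = map_mx polyC (invmx P) *m 'X%:M *m map_mx polyC P.
  by rewrite -mulmxA -scalar_mxC mulmxA -map_mxM mulVmx // map_mx1 mul1mx.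
rewrite {1}XE !map_mxM -mulmxBl -mulmxBr !det_mulmx mulrC mulrA -det_mulmx -map_mxM.
by rewrite mulmxV // map_mx1 det1 mul1r.
Qed.

Section Adjoint.
Variable C : numClosedFieldType.

Lemma adjmxM m n p (M : 'M[C]_(m, n)) (N : 'M[C]_(n, p)) :
  adjmx (M *m N) = adjmx N *m adjmx M.
Proof. by rewrite /adjmx trmx_mul map_mxM. Qed.

Lemma adjmxK m n (M : 'M[C]_(m, n)) : adjmx (adjmx M) = M.
Proof. exact: trmxCK. Qed.

Lemma adjmxN m n (M : 'M[C]_(m, n)) : adjmx (- M) = - adjmx M.
Proof. by rewrite /adjmx linearN /= map_mxN. Qed.

Lemma adjmx_pid m n r : adjmx (pid_mx r : 'M[C]_(m, n)) = pid_mx r.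
Proof. by rewrite /adjmx tr_pid_mx map_pid_mx. Qed.

Lemma adjmx_block m1 m2 n1 n2 (a : 'M[C]_(m1, n1)) (b : 'M[C]_(m1, n2))
  (c : 'M[C]_(m2, n1)) (d : 'M[C]_(m2, n2)) :
  adjmx (block_mx a b c d) = block_mx (adjmx a) (adjmx c) (adjmx b) (adjmx d).
Proof. by rewrite /adjmx tr_block_mx map_block_mx. Qed.

Lemma adjmx_col m1 m2 n (a : 'M[C]_(m1, n)) (b : 'M[C]_(m2, n)) :
  adjmx (col_mx a b) = row_mx (adjmx a) (adjmx b).
Proof. by rewrite /adjmx tr_col_mx map_row_mx. Qed.

Lemma adjmx_unit n (M : 'M[C]_n) : (adjmx M \in unitmx) = (M \in unitmx).
Proof. by rewrite /adjmx map_unitmx unitmx_tr. Qed.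

Lemma adjmx_inv n (M : 'M[C]_n) : adjmx (invmx M) = invmx (adjmx M).
Proof. by rewrite /adjmx trmx_inv map_invmx. Qed.

Lemma adjmx_unitary n (P : 'M[C]_n) : P \is unitarymx -> adjmx P = invmx P.
Proof. by move=> PU; rewrite invmx_unitary. Qed.

Lemma adjmx_congr_herm m n (X : 'M[C]_(m, n)) (S : 'M[C]_n) :
  adjmx S = S -> adjmx (X *m S *m adjmx X) = X *m S *m adjmx X.
Proof. by move=> hS; rewrite !adjmxM adjmxK hS mulmxA. Qed.

Lemma adjmx_formM m n p (u : 'M[C]_(m, n)) (X : 'M[C]_(n, p)) (S : 'M[C]_p) :
  u *m X *m S *m adjmx (u *m X) = u *m (X *m S *m adjmx X) *m adjmx u.
Proof. by rewrite !adjmxM !mulmxA. Qed.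

End Adjoint.

Section RootsWithMultiplicity.
Variable F : closedFieldType.

Lemma perm_roots_mult (p : {poly F}) c (t : seq F) : c != 0 ->
  p = c *: \prod_(z <- t) ('X - z%:P) -> perm_eq (roots_mult p) t.
Proof.
move=> c0 hp; rewrite /roots_mult; case: closed_field_poly_normal => r /= Hr.
have lp : lead_coef p = c.
  by rewrite hp lead_coefZ (monicP (monic_prod_XsubC _ _ _)) mulr1.
by apply: prod_XsubC_eq; apply: (scalerI c0); rewrite -hp -lp -Hr.
Qed.

Lemma mupZ_prod_XsubC c (t : seq F) x : c != 0 ->
  mup x (c *: \prod_(z <- t) ('X - z%:P)) = count_mem x t.
Proof. by move=> c0; rewrite -mul_polyC mupMr ?mu_prod_XsubC ?rootC. Qed.

End RootsWithMultiplicity.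

Section Eigenvalues.
Variable C : numClosedFieldType.

Lemma char_poly_eigenvalues n (M : 'M[C]_n) :
  char_poly M = \prod_(z <- eigenvalues M) ('X - z%:P).
Proof.
rewrite /eigenvalues /roots_mult; case: closed_field_poly_normal => r /= ->.
by rewrite (monicP (char_poly_monic M)) scale1r.
Qed.

Lemma perm_eigenvalues n (M : 'M[C]_n) (t : seq C) :
  char_poly M = \prod_(z <- t) ('X - z%:P) -> perm_eq (eigenvalues M) t.
Proof. by move=> hM; apply: (@perm_roots_mult _ _ 1); rewrite ?oner_neq0 ?scale1r. Qed.

Lemma perm_eigenvalues_block0 r s (a : 'M[C]_r) :
  perm_eq (eigenvalues (block_mx a 0 0 (0 : 'M_s))) (eigenvalues a ++ nseq s 0).
Proof.
apply: perm_eigenvalues; rewrite big_cat /= -char_poly_eigenvalues.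
rewrite /char_poly char_block_diag_mx det_ublock; congr (_ * _).
rewrite /char_poly_mx map_mx0 subr0 det_scalar big_nseq subr0.
by elim: s => [|s IHs]; rewrite ?expr0 ?exprS //= IHs.
Qed.

Lemma perm_eigenvalues_spectral n (P : 'M[C]_n) (d : 'rV[C]_n) :
  P \is unitarymx ->
  perm_eq (eigenvalues (adjmx P *m diag_mx d *m P)) [seq d 0 i | i <- enum 'I_n].
Proof.
move=> PU; apply: perm_eigenvalues.
rewrite adjmx_unitary // char_poly_similar ?unitarymx_unit //.
rewrite char_poly_trig ?diag_mx_is_trig // big_map big_enum /=.
by apply: eq_bigr => i _; rewrite mxE eqxx.
Qed.

Lemma count_eigenvalues_spectral n (P : 'M[C]_n) (d : 'rV[C]_n) (a : pred C) :
  P \is unitarymx ->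
  count a (eigenvalues (adjmx P *m diag_mx d *m P)) = #|[pred i | a (d 0 i)]|.
Proof.
move=> PU; rewrite (permP (perm_eigenvalues_spectral d PU)) count_map.
exact: count_enum_card.
Qed.

Lemma herm_spectral n (S : 'M[C]_n) : adjmx S = S ->
  exists P : 'M[C]_n, exists d : 'rV[C]_n,
    [/\ P \is unitarymx, forall i, d 0 i \is Num.real &
        S = adjmx P *m diag_mx d *m P].
Proof.
move=> hS; have Sherm : S \is hermsymmx.
  by apply/is_hermitianmxP; rewrite expr0 scale1r; exact/esym.
exists (spectralmx S), (spectral_diag S); split.
- exact: spectral_unitarymx.
- by move=> i; apply: (mxOverP (hermitian_spectral_diag_real Sherm)).
- have /orthomx_spectralP := hermitian_normalmx Sherm.
  by rewrite invmx_unitary ?spectral_unitarymx.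
Qed.

Lemma count_sign_real (s : seq C) : all (mem Num.real) s ->
  (count (fun z => 0 < z)%R s + count (fun z => z < 0)%R s
   + count (fun z => z == 0)%R s)%N = size s.
Proof.
elim: s => //= z s IHs /andP[zreal /IHs <-].
by case: (real_ltgtP zreal (real0 C)); rewrite /= ?add0n ?add1n ?addnS ?addSn.
Qed.

Lemma count_eigenvalues_sign n (S : 'M[C]_n) : adjmx S = S ->
  (count (fun z => 0 < z)%R (eigenvalues S) + count (fun z => z < 0)%R (eigenvalues S)
   + count (fun z => z == 0)%R (eigenvalues S))%N = n.
Proof.
move=> /herm_spectral [P [d [PU dreal ->]]].
rewrite !(permP (perm_eigenvalues_spectral d PU)) count_sign_real.
  by rewrite size_map size_enum_ord.
by apply/allP => _ /mapP[i _ ->]; exact: dreal.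
Qed.

End Eigenvalues.

(** * Sylvester's law of inertia *)

Section Sylvester.
Variable C : numClosedFieldType.

Lemma form_diagE m (y e : 'rV[C]_m) :
  (y *m diag_mx e *m adjmx y) 0 0 = \sum_j e 0 j * (y 0 j * (y 0 j)^*).
Proof.
rewrite mul_mx_diag !mxE; apply: eq_bigr => j _; rewrite !mxE.
by rewrite mulrAC mulrC mulrA.
Qed.

Lemma form_diag_gt0 m (y e : 'rV[C]_m) : y != 0 -> (forall j, 0 < e 0 j) ->
  0 < (y *m diag_mx e *m adjmx y) 0 0.
Proof.
move=> y0 epos; rewrite form_diagE.
have [i yi] : exists i, y 0 i != 0.
  apply/existsP; apply: contraNT y0; rewrite negb_exists => /forallP y_eq0.
  by apply/eqP/rowP => j; rewrite mxE; apply/eqP; rewrite -[_ == _]negbK y_eq0.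
rewrite (bigD1 i) //= ltr_wpDr ?sumr_ge0 //.
  by move=> j _; rewrite mulr_ge0 ?mul_conjC_ge0 ?ltW.
by rewrite mulr_gt0 ?mul_conjC_gt0.
Qed.

Lemma form_diag_le0 m (y e : 'rV[C]_m) : (forall j, e 0 j <= 0) ->
  (y *m diag_mx e *m adjmx y) 0 0 <= 0.
Proof.
move=> eneg; rewrite form_diagE sumr_le0 // => j _.
by rewrite mulr_le0_ge0 ?mul_conjC_ge0.
Qed.

Lemma rowsub_spectral_form m k (s : 'I_k -> 'I_m) (P : 'M[C]_m) (d : 'rV[C]_m) :
  injective s -> P \is unitarymx ->
  rowsub s P *m (adjmx P *m diag_mx d *m P) *m adjmx (rowsub s P)
  = diag_mx (\row_j d 0 (s j)).
Proof.
move=> sinj PU; rewrite rowsubE adjmxM !mulmxA !mulmxtVK //.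
apply/matrixP => i j; rewrite mul_mx_diag !mxE (bigD1 (s i)) //= big1.
  rewrite !mxE eqxx addr0 mul1r (inj_eq sinj) eq_sym.
  by case: eqP => _; rewrite ?conjC1 ?conjC0 ?mulr1 ?mulr0.
by move=> b /negPf nb; rewrite !mxE eq_sym nb !mul0r.
Qed.

Lemma rowsub_unitary m k (s : 'I_k -> 'I_m) (P : 'M[C]_m) :
  injective s -> P \is unitarymx -> rowsub s P \is unitarymx.
Proof.
move=> sinj PU; apply/unitarymxP.
have := rowsub_spectral_form (const_mx 1) sinj PU.
rewrite diag_const_mx mulmx1 adjmx_unitary // mulVmx ?unitarymx_unit // mulmx1 => ->.
by apply/matrixP => i j; rewrite !mxE.
Qed.

(* If P' had more positive directions than P, their span, pulled back by X,
   would meet the nonpositive eigenspace of S, where the form of S is then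
   both positive and nonpositive. *)
Lemma card_pos_congr_le m (X P P' : 'M[C]_m) (d d' : 'rV[C]_m) :
  X \in unitmx -> P \is unitarymx -> P' \is unitarymx ->
  (forall i, d 0 i \is Num.real) ->
  X *m (adjmx P *m diag_mx d *m P) *m adjmx X = adjmx P' *m diag_mx d' *m P' ->
  (#|[pred i | (0 < d' 0 i)%R]| <= #|[pred i | (0 < d 0 i)%R]|)%N.
Proof.
move=> Xu PU P'U dreal hS; set S := adjmx P *m diag_mx d *m P in hS.
pose sp := @enum_val _ [pred i | 0 < d' 0 i].
pose sn := @enum_val _ [pred i | d 0 i <= 0].
have card_split : (#|[pred i | (0 < d 0 i)%R]| + #|[pred i | (d 0 i <= 0)%R]|)%N = m.
  rewrite -[RHS]card_ord -(cardC [pred i | 0 < d 0 i]); congr addn.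
  by apply: eq_card => i; rewrite !inE real_leNgt ?real0.
rewrite leqNgt; apply/negP => hlt.
have [|y [z [y0 yz]]] := common_nonzero_row (U := rowsub sp P' *m X) (V := rowsub sn P).
  rewrite mxrankMfree ?row_free_unit // !mxrank_unitary ?rowsub_unitary //;
    try exact: enum_val_inj.
  by rewrite -[X in (X < _)%N]card_split ltn_add2r.
have : 0 < (y *m (rowsub sp P' *m X) *m S *m adjmx (y *m (rowsub sp P' *m X))) 0 0.
  rewrite (mulmxA y) !adjmx_formM hS rowsub_spectral_form //; last exact: enum_val_inj.
  apply: form_diag_gt0 => [|j]; first by apply: contraNneq y0 => ->; rewrite mul0mx.
  by rewrite mxE; exact: (enum_valP j).
rewrite yz adjmx_formM rowsub_spectral_form //; last exact: enum_val_inj.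
have : (z *m diag_mx (\row_j d 0 (sn j)) *m adjmx z) 0 0 <= 0.
  by apply: form_diag_le0 => j; rewrite mxE; exact: (enum_valP j).
by move/le_gtF ->.
Qed.

Lemma count_pos_eigenvalues_congr n (S X : 'M[C]_n) :
  adjmx S = S -> X \in unitmx ->
  count (fun z => 0 < z)%R (eigenvalues (X *m S *m adjmx X))
  = count (fun z => 0 < z)%R (eigenvalues S).
Proof.
move=> hS Xu.
have [P [d [PU dreal eS]]] := herm_spectral hS.
have [P' [d' [P'U d'real eS']]] := herm_spectral (adjmx_congr_herm X hS).
rewrite eS' [in RHS]eS !count_eigenvalues_spectral //.
apply/eqP; rewrite eqn_leq; apply/andP; split.
  by apply: (card_pos_congr_le Xu PU P'U dreal); rewrite -eS.
have Xinv : invmx X \in unitmx by rewrite unitmx_inv.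
apply: (card_pos_congr_le Xinv P'U PU d'real).
by rewrite -eS' -eS adjmx_inv !mulmxA mulVmx // mul1mx mulmxK ?adjmx_unit.
Qed.

Lemma count_pos_eigenvalues_opp n (S : 'M[C]_n) : adjmx S = S ->
  count (fun z => 0 < z)%R (eigenvalues (- S)) = count (fun z => z < 0)%R (eigenvalues S).
Proof.
move=> /herm_spectral [P [d [PU _ ->]]].
rewrite -mulNmx -mulmxN -linearN !count_eigenvalues_spectral //.
by apply: eq_card => i; rewrite !inE mxE oppr_gt0.
Qed.

Lemma count_neg_eigenvalues_congr n (S X : 'M[C]_n) :
  adjmx S = S -> X \in unitmx ->
  count (fun z => z < 0)%R (eigenvalues (X *m S *m adjmx X))
  = count (fun z => z < 0)%R (eigenvalues S).
Proof.
move=> hS Xu; have hNS : adjmx (- S) = - S by rewrite adjmxN hS.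
rewrite -count_pos_eigenvalues_opp ?adjmx_congr_herm // -mulNmx -mulmxN.
by rewrite count_pos_eigenvalues_congr ?count_pos_eigenvalues_opp.
Qed.

Lemma count_eq0_eigenvalues_congr n (S X : 'M[C]_n) :
  adjmx S = S -> X \in unitmx ->
  count (fun z => z == 0)%R (eigenvalues (X *m S *m adjmx X))
  = count (fun z => z == 0)%R (eigenvalues S).
Proof.
move=> hS Xu.
apply/(@addnI (count (fun z => 0 < z)%R (eigenvalues S)
               + count (fun z => z < 0)%R (eigenvalues S))).
rewrite -{1}(count_pos_eigenvalues_congr hS Xu) -{1}(count_neg_eigenvalues_congr hS Xu).
by rewrite !count_eigenvalues_sign ?adjmx_congr_herm.
Qed.

End Sylvester.

(** * Normal form of the pair (A, B) *)

Section PencilNormalForm.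
Variable C : numClosedFieldType.

Lemma unitary_rsubmx_eq0 m r s (B : 'M[C]_(m, r + s)) : \rank B = r ->
  exists2 Q : 'M[C]_(r + s), Q \is unitarymx & rsubmx (B *m adjmx Q) = 0.
Proof.
(* Orthonormal bases of the row space of B and of its orthogonal complement. *)
move=> rB; have := schmidt_complete_unitarymx B; rewrite /schmidt_complete.
set Q2 := schmidt (row_base (orthomx _ _ B)).
have BQ2 : B *m adjmx Q2 = 0.
  apply/orthomx1P.
  by rewrite orthomx_sym /Q2 eqmx_schmidt_free ?row_base_free // eq_row_base.
move: (schmidt (row_base B)) Q2 BQ2; rewrite rank_ortho rB addKn => Q1 Q2 BQ2 QU.
by exists (col_mx Q1 Q2); rewrite // adjmx_col mul_mx_row row_mxKr.
Qed.

Lemma pencil_normal_form r s (B : 'M[C]_(r + s)) : \rank B = r ->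
  exists (X Q : 'M[C]_(r + s)),
    [/\ X \in unitmx, Q \is unitarymx & X *m B *m adjmx Q = pid_mx r].
Proof.
move=> rB; have [Q QU BQ0] := unitary_rsubmx_eq0 rB.
have Qu : adjmx Q \in unitmx by rewrite adjmx_unit unitarymx_unit.
have defBQ : B *m adjmx Q = row_mx (lsubmx (B *m adjmx Q)) 0 by rewrite -BQ0 hsubmxK.
have [X Xu XB1] : exists2 X, X \in unitmx & X *m lsubmx (B *m adjmx Q) = pid_mx r.
  apply: pid_mx_unit_mul; rewrite -(@rank_row_mx0 _ _ _ s) -defBQ.
  by rewrite mxrankMfree ?row_free_unit.
exists X, Q; split => //.
by rewrite -mulmxA defBQ mul_mx_row XB1 mulmx0 pid_mx_col pid_mx_block block_mxEh col_mx0.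
Qed.

Lemma detpencil_mul n (X Y A B : 'M[C]_n) :
  detpencil (X *m A *m Y) (X *m B *m Y) = (\det X * \det Y)%:P * detpencil A B.
Proof.
rewrite /detpencil !map_mxM scalemxAl scalemxAr -mulmxBl -mulmxBr.
by rewrite !det_mulmx !det_map_mx polyCM mulrAC.
Qed.

Lemma mul_adj_pid_block r s (a : 'M[C]_r) b c (d : 'M[C]_s) :
  block_mx a b c d *m adjmx (pid_mx r : 'M_(r + s)) = block_mx a 0 c 0.
Proof.
by rewrite adjmx_pid pid_mx_block mulmx_block !mulmx0 !mulmx1 !addr0.
Qed.

Lemma herm_pencil_block r s (a : 'M[C]_r) b c (d : 'M[C]_s) :
  let S := block_mx a b c d *m adjmx (pid_mx r : 'M_(r + s)) in
  adjmx S = S -> c = 0 /\ adjmx a = a.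
Proof.
rewrite /= mul_adj_pid_block adjmx_block.
by move=> /eq_block_mx[aE _ cE _]; rewrite -cE /adjmx trmx0 map_mx0.
Qed.

Lemma detpencil_block r s (a : 'M[C]_r) b (d : 'M[C]_s) :
  detpencil (block_mx a b 0 d) (pid_mx r) = ((-1) ^+ r * \det d)%:P * char_poly a.
Proof.
rewrite /detpencil pid_mx_block !map_block_mx !map_mx0 map_mx1 scale_block_mx.
rewrite !scaler0 scalemx1 opp_block_mx add_block_mx !oppr0 !addr0.
rewrite det_ublock det_map_mx -opprB -scaleN1r detZ /char_poly /char_poly_mx.
by rewrite polyCM rmorph_sign mulrAC.
Qed.

Lemma pencil_reduction r s (A B : 'M[C]_(r + s)) :
  \rank B = r -> \rank (row_mx A B) = (r + s)%N ->
  adjmx (A *m adjmx B) = A *m adjmx B ->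
  exists2 a : 'M[C]_r, adjmx a = a &
   [/\ exists2 c, c != 0 & detpencil A B = c *: char_poly a,
       n_plus A B = count (fun z => 0 < z)%R (eigenvalues a),
       n_minus A B = count (fun z => z < 0)%R (eigenvalues a) &
       n_zero A B = (count (fun z => z == 0)%R (eigenvalues a) + s)%N].
Proof.
move=> rB rAB hS.
have [X [Q [Xu QU XBQ]]] := pencil_normal_form rB.
have Qu : adjmx Q \in unitmx by rewrite adjmx_unit unitarymx_unit.
set A' := X *m A *m adjmx Q.
have hS' : A' *m adjmx (pid_mx r) = X *m (A *m adjmx B) *m adjmx X.
  by rewrite -XBQ /A' !adjmxM adjmxK !mulmxA mulmxKtV.
rewrite -[A']submxK in hS'.
have := adjmx_congr_herm X hS; rewrite -hS' => /herm_pencil_block[c0 aherm].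
have du : drsubmx A' \in unitmx.
  apply: (unitmx_pencil_block (a := ulsubmx A') (b := ursubmx A')).
  by rewrite -c0 submxK -XBQ mxrank_row_mx_mul.
have hdet : detpencil A' (pid_mx r) = ((-1) ^+ r * \det (drsubmx A'))%:P * char_poly (ulsubmx A').
  by rewrite -{1}[A']submxK c0 detpencil_block.
rewrite -XBQ detpencil_mul in hdet.
have XSX : X *m (A *m adjmx B) *m adjmx X = block_mx (ulsubmx A') 0 0 (0 : 'M_s).
  by rewrite -hS' mul_adj_pid_block c0.
have kXQ : \det X * \det (adjmx Q) != 0 by rewrite mulf_neq0 // -unitfE -unitmxE.
have kd : (-1) ^+ r * \det (drsubmx A') != 0.
  by rewrite mulf_neq0 ?signr_eq0 // -unitfE -unitmxE.
exists (ulsubmx A') => //; split.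
- exists ((\det X * \det (adjmx Q))^-1 * ((-1) ^+ r * \det (drsubmx A'))).
    by rewrite mulf_neq0 ?invr_eq0.
  by rewrite -mul_polyC polyCM -mulrA -hdet mulrA -polyCM mulVf ?mul1r.
- rewrite /n_plus -(count_pos_eigenvalues_congr hS Xu) XSX.
  by rewrite (permP (perm_eigenvalues_block0 _ _)) count_cat count_nseq ltxx addn0.
- rewrite /n_minus -(count_neg_eigenvalues_congr hS Xu) XSX.
  by rewrite (permP (perm_eigenvalues_block0 _ _)) count_cat count_nseq ltxx addn0.
- rewrite /n_zero -(count_eq0_eigenvalues_congr hS Xu) XSX.
  by rewrite (permP (perm_eigenvalues_block0 _ _)) count_cat count_nseq eqxx mul1n.
Qed.

End PencilNormalForm.

Unset Implicit Arguments.
Set Strict Implicit.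

Theorem lemma3p8 (R : rcfType) (n : nat) (A B : 'M[R[i]]_n) :
  \rank (row_mx A B) = n ->
  adjmx (A *m adjmx B) = A *m adjmx B ->
  [/\ detpencil A B != 0,
      npos_zeros (detpencil A B) = n_plus A B,
      nneg_zeros (detpencil A B) = n_minus A B &
      (root (detpencil A B) 0 ->
         (mup 0 (detpencil A B) + n_plus A B + n_minus A B)%N = \rank B
         /\ (mup 0 (detpencil A B) <= n_zero A B)%N)].
Proof.
move=> rAB hS.
have [r rB] : exists r, \rank B = r by eexists.
have [s defn] : exists s, (r + s)%N = n.
  by exists (n - r)%N; rewrite -rB subnKC ?rank_leq_row.
subst n.
have [a aherm [[c c0 hdet] hpos hneg hzero]] := pencil_reduction rB rAB hS.
rewrite char_poly_eigenvalues in hdet.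
have roots_det := perm_roots_mult c0 hdet.
have mup_det : mup 0 (detpencil A B) = count (fun z => z == 0)%R (eigenvalues a).
  by rewrite hdet mupZ_prod_XsubC.
split.
- by rewrite hdet scale_poly_eq0 negb_or c0 monic_neq0 ?monic_prod_XsubC.
- by rewrite /npos_zeros (permP roots_det) hpos.
- by rewrite /nneg_zeros (permP roots_det) hneg.
move=> _; rewrite mup_det hpos hneg hzero rB leq_addr; split=> //.
by rewrite -addnA addnC count_eigenvalues_sign.
Qed.
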